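(* The rational map $\mathbb{P}^2 \dashrightarrow \mathbb{P}^3$, $(r:s:t)\mapsto(w:x:y:z)$ with \begin{align*} w &= t^3-2t^2s-2tsr+ts^2+r^2s-r^3-rs^2,\\ x &= -t^3-2t^2s+ts^2-2tsr+2rs^2-s^3+r^3-2r^2s,\\ y &= 2t^3+3t^2r-2t^2s-2tsr+3tr^2+ts^2+2rs^2-s^3+r^3-2r^2s,\\ z &= -2t^3+t^2s-3t^2r-3tr^2+4tsr-2ts^2-r^3+r^2s-rs^2, \end{align*} defined over $\mathbb{Q}$, is a birational map from $\mathbb{P}^2$ onto the cubic surface $S_1: w^3 + x^3 = y^3 + z^3$. For this parametrization, $w^3+x^3$ factors over $\mathbb{Q}$ as a product of one linear, two quadratic and one quartic polynomial in $r,s,t$.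
   Context: No additional context. *)

From HB Require Import structures.
From mathcomp Require Import all_boot all_order all_algebra.
From mathcomp Require Import mpoly.
Set Implicit Arguments. Unset Strict Implicit. Unset Printing Implicit Defensive.
Import Order.TTheory GRing.Theory Num.Theory.
Local Open Scope ring_scope.

Definition r_ : {mpoly rat[3]} := 'X_0.
Definition s_ : {mpoly rat[3]} := 'X_1.
Definition t_ : {mpoly rat[3]} := 'X_2.

Definition wP : {mpoly rat[3]} :=
  t_^+3 - 2%:R*t_^+2*s_ - 2%:R*t_*s_*r_ + t_*s_^+2 + r_^+2*s_ - r_^+3 - r_*s_^+2.
Definition xP : {mpoly rat[3]} :=
  - t_^+3 - 2%:R*t_^+2*s_ + t_*s_^+2 - 2%:R*t_*s_*r_ + 2%:R*r_*s_^+2 - s_^+3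
  + r_^+3 - 2%:R*r_^+2*s_.
Definition yP : {mpoly rat[3]} :=
  2%:R*t_^+3 + 3%:R*t_^+2*r_ - 2%:R*t_^+2*s_ - 2%:R*t_*s_*r_ + 3%:R*t_*r_^+2
  + t_*s_^+2 + 2%:R*r_*s_^+2 - s_^+3 + r_^+3 - 2%:R*r_^+2*s_.
Definition zP : {mpoly rat[3]} :=
  - 2%:R*t_^+3 + t_^+2*s_ - 3%:R*t_^+2*r_ - 3%:R*t_*r_^+2 + 4%:R*t_*s_*r_
  - 2%:R*t_*s_^+2 - r_^+3 + r_^+2*s_ - r_*s_^+2.

Definition param : 4.-tuple {mpoly rat[3]} := [tuple wP; xP; yP; zP].

Definition S1form : {mpoly rat[4]} :=
  'X_0^+3 + 'X_1^+3 - 'X_2^+3 - 'X_3^+3.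

(* A rational map P^(n-1) --> P^(m-1) given by forms F (all of degree e) is
   birational onto the (irreducible) hypersurface {C = 0} of P^(m-1), over K,
   iff its image lies in {C = 0} and there is an inverse rational map
   G : {C = 0} --> P^(n-1) given by forms of a common degree d over K, with
   G o F = lam * id  (lam a nonzero form, i.e. identity on a dense open), and
   F o G = mu * id  modulo C, where mu does not vanish identically on {C = 0}
   (i.e. C does not divide mu). *)
Definition birational_onto_hypersurface (K : fieldType) (n m : nat)
    (F : m.-tuple {mpoly K[n]}) (C : {mpoly K[m]}) : Prop :=
  (exists e, forall j, tnth F j \is e.-homog) /\
  C \mPo F = 0 /\
  exists (d : nat) (G : n.-tuple {mpoly K[m]}) (lam : {mpoly K[n]})
         (mu : {mpoly K[m]}),
    [/\ forall i, tnth G i \is d.-homog,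
        lam != 0,
        ~ (exists q, mu = q * C),
        forall i, tnth G i \mPo F = lam * 'X_i
      & forall j, exists q, tnth F j \mPo G - mu * 'X_j = q * C].

(* Irreducibility in the multivariate polynomial ring over a field:
   non-constant, and any factorization has a constant factor (a unit). *)
Definition mirreducible (K : fieldType) (n : nat) (p : {mpoly K[n]}) : Prop :=
  (1 < msize p)%N /\
  forall a b : {mpoly K[n]}, p = a * b -> (msize a <= 1)%N \/ (msize b <= 1)%N.

From HB Require Import structures.
From mathcomp Require Import all_boot all_order all_algebra.
From mathcomp Require Import mpoly.
From mathcomp Require Import ring lra zify.
Set Implicit Arguments.
Unset Strict Implicit.
Unset Printing Implicit Defensive.
Import Order.TTheory GRing.Theory Num.Theory.
Local Open Scope ring_scope.

(* Birationality is certified by polynomial identities: three quadrics G with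
   G o F = lam * id and F o G = mu * id modulo the cubic form, where lam is a
   nonzero quintic and mu does not vanish at the point (1:0:0:1) of S_1.
   For the factorization, restrict a form of degree d to a line of P^2 on which
   its degree does not drop: any factorization restricts to one of the same
   degrees, so irreducibility over Q of the restriction transfers to the form.
   The two conics restrict to quadratics without real roots, the quartic to
   27X^4 + 9X^2 + 1, which has no rational root and no quadratic factor since
   a splitting (aX^2 + bX + c)(dX^2 + eX + f) would force 27 to be a rational
   square. *)

Section MpolyComRing.
Variables (n k : nat) (R : comRingType).
Implicit Types (p q C : {mpoly R[n]}) (lq : n.-tuple {mpoly R[k]}) (v : 'I_n -> R).

Lemma comp_mpolyM lq : {morph comp_mpoly lq : p q / p * q}.
Proof. exact: rmorphM. Qed.

Lemma comp_mpolyXn lq m : {morph comp_mpoly lq : p / p ^+ m}.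
Proof. exact: rmorphXn. Qed.

Lemma comp_mpoly_nat lq m : (m%:R : {mpoly R[n]}) \mPo lq = m%:R.
Proof. exact: rmorph_nat. Qed.

Lemma meval_not_multiple v C p :
  meval v C = 0 -> meval v p != 0 -> ~ exists q, p = q * C.
Proof. by move=> vC0 + [q pqC]; rewrite pqC mevalM vC0 mulr0 eqxx. Qed.

End MpolyComRing.

Lemma mmapXU n (R : ringType) (S : comRingType) (f : {rmorphism R -> S})
    (h : 'I_n -> S) i :
  mmap f h 'X_i = h i.
Proof. by rewrite mmapX mmap1U. Qed.

(* Constants go first: the additivity rule would otherwise unfold [k%:R]
   into [1 + ... + 1]. *)
Definition comp_mpoly_simp :=
  (comp_mpoly_nat, comp_mpolyN, comp_mpolyM, comp_mpolyXn, comp_mpolyXU,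
   comp_mpolyD).

Lemma dhomogXU n (R : ringType) (i : 'I_n) : ('X_i : {mpoly R[n]}) \is 1.-homog.
Proof. by rewrite dhomogX /= mdeg1. Qed.

Lemma dhomog_nat n (R : ringType) m : (m%:R : {mpoly R[n]}) \is 0.-homog.
Proof. exact/rpredMn/dhomog1. Qed.

Lemma msize_dhomog n (R : ringType) d (p : {mpoly R[n]}) :
  p \is d.-homog -> p != 0 -> msize p = d.+1.
Proof. by move=> /dhomog_mf p_d nz_p; rewrite -mlead_deg // p_d ?mlead_supp. Qed.

(* [dhomogM] cannot guess how to split the degree of a product, so the degree
   of each factor is read off its syntax. *)
Ltac mpoly_deg p :=
  lazymatch p with
  | ?a * ?b => let d := mpoly_deg a in let e := mpoly_deg b in constr:((d + e)%N)
  | ?a ^+ ?k => let d := mpoly_deg a in constr:((d * k)%N)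
  | ?a + _ => mpoly_deg a
  | - ?a => mpoly_deg a
  | _%:R => constr:(0%N)
  | _ => constr:(1%N)
  end.

Ltac dhomog_tac :=
  lazymatch goal with
  | |- is_true (_ + _ \in _) => apply: rpredD; dhomog_tac
  | |- is_true (- _ \in _) => rewrite rpredN; dhomog_tac
  | |- is_true (?a * ?b \in _) =>
      let d := mpoly_deg a in let e := mpoly_deg b in
      apply: (dhomogM (d := d) (e := e)); dhomog_tac
  | |- is_true (?a ^+ _ \in _) =>
      let d := mpoly_deg a in apply: (dhomogMn (d := d)); dhomog_tac
  | |- is_true (_%:R \in _) => exact: dhomog_nat
  | |- _ => exact: dhomogXU
  end.

Section LineRestriction.
Variables (F : fieldType) (n : nat) (h : 'I_n -> {poly F}).
Hypothesis size_h : forall i, (size (h i) <= 2)%N.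
Local Notation restr := (mmap (@polyC F) h).

Lemma size_mmap1_le m : (size (mmap1 h m) <= (mdeg m).+1)%N.
Proof.
rewrite /mmap1 mdegE.
elim/big_rec2: _ => [|i q d _ IHd]; first by rewrite size_poly1.
have size_hX : (size (h i ^+ m i) <= (m i).+1)%N.
  by apply: leq_trans (size_exp_leq _ _) _; have := size_h i; nia.
apply: leq_trans (size_mul_leq _ _) _.
(* The [set]s identify [size] terms elaborated through different instance
   paths, which lia would otherwise treat as distinct atoms. *)
by move: size_hX IHd; set s1 := size (h i ^+ m i); set s2 := size q; lia.
Qed.

Lemma size_mmap_le p : (size (restr p) <= msize p)%N.
Proof.
rewrite /mmap big_seq; apply: (big_ind (fun q : {poly F} => size q <= msize p)%N).
- by rewrite size_poly0.
- by move=> q1 q2 sq1 sq2; rewrite (leq_trans (size_polyD _ _)) // geq_max sq1 sq2.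
move=> m /msize_mdeg_lt m_lt; apply: leq_trans (size_mul_leq _ _) _.
move: (size_polyC_leq1 p@_m) (size_mmap1_le m).
by set s1 := size (p@_m)%:P; set s2 := size (mmap1 h m); lia.
Qed.

Lemma msize_dhomog_restr p d :
  p \is d.-homog -> size (restr p) = d.+1 -> msize p = d.+1.
Proof.
move=> p_d size_p; apply: msize_dhomog p_d _.
by apply: contra_eq_neq size_p => ->; rewrite mmap0 size_poly0.
Qed.

Lemma mirreducible_restr p :
  size (restr p) = msize p -> irreducible_poly (restr p) -> mirreducible p.
Proof.
move=> size_p irr_p; split=> [|a b def_p]; first by rewrite -size_p; case: irr_p.
case: (leqP (msize a) 1) => [|a_gt1]; [by left | right].
rewrite leqNgt; apply/negP => b_gt1.
have nz_a : a != 0 by rewrite -msize_poly_eq0 gtn_eqF // ltnW.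
have nz_b : b != 0 by rewrite -msize_poly_eq0 gtn_eqF // ltnW.
have msize_ab := msizeM nz_a nz_b; rewrite -def_p in msize_ab.
have restr_ab : restr p = restr a * restr b by rewrite def_p rmorphM.
have nz_rp := irredp_neq0 irr_p.
have nz_ra : restr a != 0.
  by apply: contraNneq nz_rp; rewrite restr_ab => ->; rewrite mul0r.
have nz_rb : restr b != 0.
  by apply: contraNneq nz_rp; rewrite restr_ab => ->; rewrite mulr0.
have size_ab := size_mul nz_ra nz_rb; rewrite -restr_ab size_p msize_ab in size_ab.
move: a_gt1 b_gt1 msize_ab (size_mmap_le a) (size_mmap_le b) size_ab nz_ra nz_rb.
rewrite -!size_poly_gt0; set ma := msize a; set mb := msize b.
set sa := size (restr a); set sb := size (restr b).
move=> a_gt1 b_gt1 msize_ab sa_le sb_le size_ab sa_gt0 sb_gt0.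
have /eqp_size : restr a %= restr p.
  by apply: irr_p; [rewrite gtn_eqF //; change (1 < sa)%N; lia
                  | rewrite restr_ab dvdp_mulIl].
change (sa = size (restr p) -> False); rewrite size_p msize_ab; lia.
Qed.

Lemma mirreducible_dhomog_restr p d : p \is d.-homog ->
  size (restr p) = d.+1 -> irreducible_poly (restr p) -> mirreducible p.
Proof.
move=> p_d size_p; apply: mirreducible_restr.
by rewrite size_p (msize_dhomog_restr p_d size_p).
Qed.

End LineRestriction.

Lemma rat_sqr_logn_even (z : rat) (m p : nat) :
  prime p -> z ^+ 2 = m%:R -> ~~ odd (logn p m).
Proof.
move=> p_pr zm; have [->|m_gt0] := posnP m; first by rewrite logn0.
pose nz := numq z; pose dz := denq z.
have nz_dz : dz != 0 by rewrite denq_neq0.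
have int_eq : nz ^+ 2 = m%:R * dz ^+ 2.
  apply: (@intr_inj rat); rewrite rmorphXn rmorphM rmorph_nat rmorphXn /=.
  have -> : (nz%:~R : rat) = z * dz%:~R.
    by rewrite -[in RHS](divq_num_den z) mulfVK // intr_eq0.
  by rewrite exprMn zm.
have nat_eq : (`|nz| ^ 2 = m * `|dz| ^ 2)%N.
  by have := congr1 absz int_eq; rewrite abszM !abszX natz.
have dz_gt0 : (0 < `|dz|)%N by rewrite absz_gt0.
have nz_gt0 : (0 < `|nz|)%N.
  have := expn_gt0 `|nz| 2.
  by rewrite nat_eq muln_gt0 m_gt0 expn_gt0 dz_gt0 /= orbF => <-.
have := congr1 (logn p) nat_eq.
rewrite lognM ?expn_gt0 ?dz_gt0 // !lognX => log_eq.
suff -> : logn p m = ((logn p `|nz| - logn p `|dz|) * 2)%N by rewrite oddM andbF.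
lia.
Qed.

Lemma quadratic_irreducible (F : fieldType) (a b c : F) :
  a != 0 -> (forall x, a * x ^+ 2 + b * x + c != 0) ->
  irreducible_poly (Poly [:: c; b; a]).
Proof.
move=> nz_a no_root; apply: cubic_irreducible; first by rewrite (@PolyK _ 0).
move=> x; apply/negP; rewrite rootE horner_Poly /= => /eqP px0.
by move/eqP: (no_root x); apply; rewrite -[RHS]px0; ring.
Qed.

Lemma biquadratic_factor (F : fieldType) (a b c : F) (q r : {poly F}) :
  size q = 3 -> size r = 3 -> q * r = Poly [:: c; 0; b; 0; a] ->
  (exists y, a * y ^+ 2 + b * y + c = 0) \/ (exists z, z ^+ 2 = a * c).
Proof.
move=> size_q size_r qr.
have coef_qr k : \sum_(j < k.+1) q`_j * r`_(k - j) = [:: c; 0; b; 0; a]`_k.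
  by rewrite -coefM qr coef_Poly.
have q3 : q`_3 = 0 by rewrite nth_default ?size_q.
have q4 : q`_4 = 0 by rewrite nth_default ?size_q.
have r3 : r`_3 = 0 by rewrite nth_default ?size_r.
have r4 : r`_4 = 0 by rewrite nth_default ?size_r.
have lead_nz (s : {poly F}) : size s = 3 -> s`_2 != 0.
  move=> size_s; have := lead_coefE s; rewrite size_s => <-.
  by rewrite lead_coef_eq0 -size_poly_gt0 size_s.
have nz_r2 := lead_nz r size_r.
move: (coef_qr 0%N) (coef_qr 1%N) (coef_qr 2%N) (coef_qr 3%N) (coef_qr 4%N).
rewrite !big_ord_recr !big_ord0 /= !subSS !subn0 q3 q4 r3 r4.
rewrite !mul0r !mulr0 !add0r !addr0.
move=> e0 e1 e2 e3 e4.
have : r`_1 * (q`_2 * r`_0 - q`_0 * r`_2) =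
    r`_0 * (q`_1 * r`_2 + q`_2 * r`_1) - r`_2 * (q`_0 * r`_1 + q`_1 * r`_0) by ring.
rewrite e1 e3 !mulr0 subrr.
move/eqP; rewrite mulf_eq0 => /orP[/eqP r1 | /eqP/subr0_eq balanced].
  have q1 : q`_1 = 0.
    by move/eqP: e3; rewrite r1 mulr0 addr0 mulf_eq0 (negbTE nz_r2) orbF => /eqP.
  left; exists (- q`_0 / q`_2).
  by rewrite -e0 -e2 -e4 q1 r1; field; exact: lead_nz size_q.
right; exists (q`_0 * r`_2).
by rewrite -e4 -e0 expr2 -{1}balanced; ring.
Qed.

Lemma biquadratic_irreducible (F : fieldType) (a b c : F) :
  a != 0 -> (forall y, a * y ^+ 2 + b * y + c != 0) ->
  (forall z, z ^+ 2 != a * c) -> irreducible_poly (Poly [:: c; 0; b; 0; a]).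
Proof.
set p := Poly _ => nz_a no_root no_sqrt.
have size_p : size p = 5 by rewrite (@PolyK _ 0).
have noroot x : ~~ root p x.
  apply/negP; rewrite rootE horner_Poly /= => /eqP px0.
  by move/eqP: (no_root (x ^+ 2)); apply; rewrite -[RHS]px0; ring.
split=> [|q size_q1 dvd_qp]; first by rewrite size_p.
have nz_p : p != 0 by rewrite -size_poly_gt0 size_p.
have nz_q : q != 0 by apply: contraTneq dvd_qp => ->; rewrite dvd0p.
case/dvdpP: (dvd_qp) => r def_p.
have nz_r : r != 0 by apply: contraNneq nz_p => r0; rewrite def_p r0 mul0r.
rewrite -dvdp_size_eqp //.
case: (size q =P 2) => [/poly2_root[x qx] | q_ne2].
  by case/negP: (noroot x); rewrite def_p rootM qx orbT.
case: (size r =P 2) => [/poly2_root[x rx] | r_ne2].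
  by case/negP: (noroot x); rewrite def_p rootM rx.
have := size_mul nz_r nz_q; rewrite -def_p size_p -!size_poly_gt0 in nz_q nz_r *.
move: size_q1 q_ne2 r_ne2 nz_q nz_r; set sq := size q; set sr := size r.
move=> sq_ne1 sq_ne2 sr_ne2 sq_gt0 sr_gt0 size_rq.
have [size_q3 | ->] : sq = 3 \/ sq = 5 by lia.
  have size_r3 : sr = 3 by lia.
  have qr : q * r = Poly [:: c; 0; b; 0; a] by rewrite mulrC -def_p.
  case: (biquadratic_factor size_q3 size_r3 qr) => [[y] | [z]] /eqP.
    by rewrite (negbTE (no_root y)).
  by rewrite (negbTE (no_sqrt z)).
by [].
Qed.

Lemma mirreducible_msize2 (F : fieldType) n (p : {mpoly F[n]}) :
  msize p = 2 -> mirreducible p.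
Proof.
move=> size_p; split=> [|a b def_p]; first by rewrite size_p.
have nz_p : p != 0 by rewrite -msize_poly_eq0 size_p.
have nz_a : a != 0 by apply: contraNneq nz_p; rewrite def_p => ->; rewrite mul0r.
have nz_b : b != 0 by apply: contraNneq nz_p; rewrite def_p => ->; rewrite mulr0.
have := msizeM nz_a nz_b; rewrite -def_p size_p.
move: nz_a nz_b; rewrite -!msize_poly_eq0 -!lt0n.
by set ma := msize a; set mb := msize b; lia.
Qed.

Lemma forall_ord3 (P : 'I_3 -> Prop) : P 0 -> P 1 -> P 2 -> forall i, P i.
Proof.
move=> P0 P1 P2 [[|[|[|//]]] lti];
  [move: P0 | move: P1 | move: P2]; congr P; exact: val_inj.
Qed.

Lemma forall_ord4 (P : 'I_4 -> Prop) : P 0 -> P 1 -> P 2 -> P 3 -> forall i, P i.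
Proof.
move=> P0 P1 P2 P3 [[|[|[|[|//]]]] lti];
  [move: P0 | move: P1 | move: P2 | move: P3]; congr P; exact: val_inj.
Qed.

Definition w_ : {mpoly rat[4]} := 'X_0.
Definition x_ : {mpoly rat[4]} := 'X_1.
Definition y_ : {mpoly rat[4]} := 'X_2.
Definition z_ : {mpoly rat[4]} := 'X_3.

Definition param_inv : 3.-tuple {mpoly rat[4]} :=
  [tuple - w_^+2 + w_*x_ + w_*y_ - w_*z_ + x_*z_ - z_^+2;
         - w_^+2 - w_*z_ + x_^+2 + x_*y_ + y_^+2 - z_^+2;
         - w_*x_ + y_*z_].

Definition lam : {mpoly rat[3]} :=
  - 6*r_^+5 + 15*r_^+4*s_ - 15*r_^+4*t_ - 24*r_^+3*s_^+2 + 30*r_^+3*s_*t_ -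
  24*r_^+3*t_^+2 + 21*r_^+2*s_^+3 - 36*r_^+2*s_^+2*t_ + 36*r_^+2*s_*t_^+2 -
  21*r_^+2*t_^+3 - 12*r_*s_^+4 + 21*r_*s_^+3*t_ - 36*r_*s_^+2*t_^+2 +
  21*r_*s_*t_^+3 - 12*r_*t_^+4 + 3*s_^+5 - 6*s_^+4*t_ + 12*s_^+3*t_^+2 -
  12*s_^+2*t_^+3 + 6*s_*t_^+4 - 3*t_^+5.

Definition mu : {mpoly rat[4]} :=
  3*w_^+5 - 4*w_^+4*x_ - 5*w_^+4*y_ + 6*w_^+4*z_ + 2*w_^+3*x_^+2 +
  2*w_^+3*x_*y_ - 7*w_^+3*x_*z_ + 2*w_^+3*y_^+2 - 8*w_^+3*y_*z_ +
  8*w_^+3*z_^+2 - 3*w_^+2*x_^+2*y_ + 3*w_^+2*x_^+2*z_ - 3*w_^+2*x_*y_^+2 +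
  3*w_^+2*x_*y_*z_ - 9*w_^+2*x_*z_^+2 - 3*w_^+2*y_^+3 + 3*w_^+2*y_^+2*z_ -
  9*w_^+2*y_*z_^+2 + 6*w_^+2*z_^+3 - w_*x_^+4 + 4*w_*x_^+3*y_ +
  9*w_*x_^+2*y_^+2 - 3*w_*x_^+2*y_*z_ + 3*w_*x_^+2*z_^+2 + 10*w_*x_*y_^+3 -
  3*w_*x_*y_^+2*z_ + 3*w_*x_*y_*z_^+2 - 5*w_*x_*z_^+3 + 5*w_*y_^+4 -
  3*w_*y_^+3*z_ + 3*w_*y_^+2*z_^+2 - 4*w_*y_*z_^+3 + 3*w_*z_^+4 - x_^+5 -
  4*x_^+4*y_ + 2*x_^+4*z_ - 7*x_^+3*y_^+2 + 7*x_^+3*y_*z_ - x_^+3*z_^+2 -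
  8*x_^+2*y_^+3 + 9*x_^+2*y_^+2*z_ - 3*x_^+2*y_*z_^+2 + x_^+2*z_^+3 -
  5*x_*y_^+4 + 7*x_*y_^+3*z_ - 3*x_*y_^+2*z_^+2 + x_*y_*z_^+3 - 2*x_*z_^+4 -
  2*y_^+5 + 2*y_^+4*z_ - 2*y_^+3*z_^+2 + y_^+2*z_^+3 - y_*z_^+4 + z_^+5.

Definition param_defect : 4.-tuple {mpoly rat[4]} :=
  [tuple
    - 2*w_^+3 + 3*w_^+2*x_ + 3*w_^+2*y_ - 3*w_^+2*z_ - w_*x_^+2 - w_*x_*y_ +
    3*w_*x_*z_ - w_*y_^+2 + 3*w_*y_*z_ - 2*w_*z_^+2 - x_^+2*z_ - x_*y_*z_ +
    2*x_*z_^+2 - y_^+2*z_ + y_*z_^+2 - z_^+3;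
    - w_^+2*x_ + w_^+2*y_ + 2*w_*x_^+2 - w_*x_*z_ - 2*w_*y_^+2 + w_*y_*z_ +
    x_^+2*y_ + x_*y_^+2 - 2*x_*y_*z_ + y_^+3 - y_^+2*z_ + y_*z_^+2;
    - w_^+2*x_ - 2*w_^+2*y_ + w_*x_^+2 + 5*w_*x_*y_ - w_*x_*z_ + 3*w_*y_^+2 -
    2*w_*y_*z_ - x_^+3 - 2*x_^+2*y_ + 2*x_^+2*z_ - 2*x_*y_^+2 + 3*x_*y_*z_ -
    x_*z_^+2 - y_^+3 + y_^+2*z_ - y_*z_^+2;
    w_^+3 - w_^+2*x_ - 2*w_^+2*y_ + w_*x_^+2 + w_*x_*y_ + w_*y_^+2].

Lemma param_dhomog j : tnth param j \is 3.-homog.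
Proof.
by move: j; apply: forall_ord4; rewrite (tnth_nth 0) /= /wP /xP /yP /zP /r_ /s_ /t_;
  dhomog_tac.
Qed.

Lemma param_inv_dhomog i : tnth param_inv i \is 2.-homog.
Proof.
by move: i; apply: forall_ord3; rewrite (tnth_nth 0) /= /w_ /x_ /y_ /z_; dhomog_tac.
Qed.

Lemma S1form_param : S1form \mPo param = 0.
Proof. by rewrite /S1form !comp_mpoly_simp /= /wP /xP /yP /zP; ring. Qed.

Lemma param_invK i : tnth param_inv i \mPo param = lam * 'X_i.
Proof.
move: i; apply: forall_ord3; rewrite (tnth_nth 0) /= /w_ /x_ /y_ /z_;
  by rewrite !comp_mpoly_simp /= /wP /xP /yP /zP /lam /r_ /s_ /t_; ring.
Qed.

Lemma paramK_mod j :
  tnth param j \mPo param_inv - mu * 'X_j = tnth param_defect j * S1form.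
Proof.
move: j; apply: forall_ord4; rewrite !(tnth_nth 0) /= /wP /xP /yP /zP /r_ /s_ /t_;
  rewrite !comp_mpoly_simp /= /S1form /mu /w_ /x_ /y_ /z_; ring.
Qed.

Lemma lam_neq0 : lam != 0.
Proof.
pose v (i : 'I_3) : rat := [:: 0; 0; 1]`_i.
have [v0 v1 v2] : [/\ meval v r_ = 0, meval v s_ = 0 & meval v t_ = 1].
  by rewrite !mevalXU.
have lam_v : meval v lam = - 3 by rewrite /lam; ring: v0 v1 v2.
apply/eqP => lam0; move/eqP: lam_v; rewrite lam0 meval0 eq_sym.
by rewrite oppr_eq0 pnatr_eq0.
Qed.

Lemma mu_not_multiple : ~ exists q, mu = q * S1form.
Proof.
pose v (i : 'I_4) : rat := [:: 1; 0; 0; 1]`_i.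
have [v0 v1 v2 v3] :
    [/\ meval v w_ = 1, meval v x_ = 0, meval v y_ = 0 & meval v z_ = 1].
  by rewrite !mevalXU.
apply: (meval_not_multiple (v := v)).
  by rewrite /S1form; ring: v0 v1 v2 v3.
have -> : meval v mu = 27 by rewrite /mu; ring: v0 v1 v2 v3.
by rewrite pnatr_eq0.
Qed.

Lemma param_birational : birational_onto_hypersurface param S1form.
Proof.
split; first by exists 3%N; exact: param_dhomog.
split; first exact: S1form_param.
exists 2%N, param_inv, lam, mu; split.
- exact: param_inv_dhomog.
- exact: lam_neq0.
- exact: mu_not_multiple.
- exact: param_invK.
by move=> j; exists (tnth param_defect j); exact: paramK_mod.
Qed.

Definition conic1 : {mpoly rat[3]} :=
  r_^+2 - r_*s_ + 4*r_*t_ + s_^+2 - 2*s_*t_ + 4*t_^+2.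

Definition conic2 : {mpoly rat[3]} :=
  r_^+2 - r_*s_ - 2*r_*t_ + s_^+2 + s_*t_ + t_^+2.

Definition quartic : {mpoly rat[3]} :=
  3*r_^+4 - 6*r_^+3*s_ + 6*r_^+3*t_ + 7*r_^+2*s_^+2 - 9*r_^+2*s_*t_ +
  9*r_^+2*t_^+2 - 4*r_*s_^+3 + 7*r_*s_^+2*t_ - 9*r_*s_*t_^+2 + 6*r_*t_^+3 +
  s_^+4 - 2*s_^+3*t_ + 4*s_^+2*t_^+2 - 3*s_*t_^+3 + 3*t_^+4.

Lemma cubes_wx_factor : wP ^+ 3 + xP ^+ 3 = - s_ * conic1 * conic2 * quartic.
Proof. by rewrite /wP /xP /conic1 /conic2 /quartic; ring. Qed.

Lemma linear_factor_dhomog : - s_ \is 1.-homog.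
Proof. by rewrite /s_; dhomog_tac. Qed.

Lemma conic1_dhomog : conic1 \is 2.-homog.
Proof. by rewrite /conic1 /r_ /s_ /t_; dhomog_tac. Qed.

Lemma conic2_dhomog : conic2 \is 2.-homog.
Proof. by rewrite /conic2 /r_ /s_ /t_; dhomog_tac. Qed.

Lemma quartic_dhomog : quartic \is 4.-homog.
Proof. by rewrite /quartic /r_ /s_ /t_; dhomog_tac. Qed.

Definition line_r0 (i : 'I_3) : {poly rat} := [:: 0; 1; 'X]`_i.
Definition line_t2r (i : 'I_3) : {poly rat} := [:: - 'X; 1; 2%:P * 'X]`_i.

Lemma size_line_r0 i : (size (line_r0 i) <= 2)%N.
Proof.
move: i; apply: forall_ord3; rewrite /line_r0 /=.
- by rewrite size_poly0.
- by rewrite size_poly1.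
- by rewrite size_polyX.
Qed.

Lemma size_line_t2r i : (size (line_t2r i) <= 2)%N.
Proof.
move: i; apply: forall_ord3; rewrite /line_t2r /=.
- by rewrite size_polyN size_polyX.
- by rewrite size_poly1.
- by rewrite size_Cmul // size_polyX.
Qed.

Lemma line_r0E :
  [/\ mmap polyC line_r0 r_ = 0, mmap polyC line_r0 s_ = 1
    & mmap polyC line_r0 t_ = 'X].
Proof. by rewrite !mmapXU. Qed.

Lemma line_t2rE :
  [/\ mmap polyC line_t2r r_ = - 'X, mmap polyC line_t2r s_ = 1
    & mmap polyC line_t2r t_ = 2%:P * 'X].
Proof. by rewrite !mmapXU. Qed.

Lemma restr_conic1 : mmap polyC line_r0 conic1 = Poly [:: 1; -2; 4].
Proof.
by have [r0 s1 tX] := line_r0E; rewrite /conic1 /= !cons_poly_def; ring: r0 s1 tX.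
Qed.

Lemma restr_conic2 : mmap polyC line_r0 conic2 = Poly [:: 1; 1; 1].
Proof.
by have [r0 s1 tX] := line_r0E; rewrite /conic2 /= !cons_poly_def; ring: r0 s1 tX.
Qed.

Lemma restr_quartic : mmap polyC line_t2r quartic = Poly [:: 1; 0; 9; 0; 27].
Proof.
have [rX s1 t2X] := line_t2rE.
by rewrite /quartic /= !cons_poly_def; ring: rX s1 t2X.
Qed.

Lemma msize_linear_factor : msize (- s_) = 2.
Proof.
apply: msize_dhomog linear_factor_dhomog _.
by rewrite oppr_eq0 -msize_poly_eq0 msizeX mdeg1.
Qed.

Lemma msize_conic1 : msize conic1 = 3.
Proof.
apply: (msize_dhomog_restr (h := line_r0) conic1_dhomog).
by rewrite restr_conic1 (@PolyK _ 0).
Qed.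

Lemma msize_conic2 : msize conic2 = 3.
Proof.
apply: (msize_dhomog_restr (h := line_r0) conic2_dhomog).
by rewrite restr_conic2 (@PolyK _ 0).
Qed.

Lemma msize_quartic : msize quartic = 5.
Proof.
apply: (msize_dhomog_restr (h := line_t2r) quartic_dhomog).
by rewrite restr_quartic (@PolyK _ 0).
Qed.

Lemma conic1_irreducible : mirreducible conic1.
Proof.
apply: (mirreducible_dhomog_restr size_line_r0 conic1_dhomog);
  rewrite restr_conic1 ?(@PolyK _ 0) //.
apply: quadratic_irreducible => // x; apply: lt0r_neq0.
by have := sqr_ge0 (4 * x - 1); nra.
Qed.

Lemma conic2_irreducible : mirreducible conic2.
Proof.
apply: (mirreducible_dhomog_restr size_line_r0 conic2_dhomog);
  rewrite restr_conic2 ?(@PolyK _ 0) //.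
apply: quadratic_irreducible => // x; apply: lt0r_neq0.
by have := sqr_ge0 (2 * x + 1); nra.
Qed.

Lemma quartic_irreducible : mirreducible quartic.
Proof.
apply: (mirreducible_dhomog_restr size_line_t2r quartic_dhomog);
  rewrite restr_quartic ?(@PolyK _ 0) //.
apply: biquadratic_irreducible => // [y | z].
  by apply: lt0r_neq0; have := sqr_ge0 (6 * y + 1); nra.
by apply/eqP; rewrite mulr1 => /(rat_sqr_logn_even (isT : prime 3)).
Qed.

Theorem mainTheorem19 :
  birational_onto_hypersurface param S1form /\
  exists L Q1 Q2 Q4 : {mpoly rat[3]},
    [/\ (msize L = 2 /\ msize Q1 = 3 /\ msize Q2 = 3 /\ msize Q4 = 5)%N,
        mirreducible L /\ mirreducible Q1 /\ mirreducible Q2 /\ mirreducible Q4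
      & wP ^+ 3 + xP ^+ 3 = L * Q1 * Q2 * Q4].
Proof.
split; first exact: param_birational.
exists (- s_), conic1, conic2, quartic; split.
- by rewrite msize_linear_factor msize_conic1 msize_conic2 msize_quartic.
- split; first exact: (mirreducible_msize2 msize_linear_factor).
  split; first exact: conic1_irreducible.
  by split; [exact: conic2_irreducible | exact: quartic_irreducible].
- exact: cubes_wx_factor.
Qed.
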